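(* Under the hypotheses of the following statement, the vectors $u_1$ and $u_2$ can be chosen nonnegative. Statement: Let $\mathcal{A}\in\mathbb{R}^{m\times m\times n}$ be $(1,2)$-symmetric and nonnegative with $\mathcal{A}=\begin{pmatrix}\mathcal{A}_1&0\\0&\mathcal{A}_2\end{pmatrix}$, $\mathcal{A}_i\in\mathbb{R}^{m_i\times m_i\times n}$, $m_1+m_2=m$, $\mathcal{A}_1,\mathcal{A}_2$ irreducible; with $\varphi$ as defined in the context, assume $\varphi(\mathcal{A})<\varphi(\mathcal{A}_1)+\|\mathcal{A}_2\|^2$, $\varphi(\mathcal{A})<\varphi(\mathcal{A}_2)+\|\mathcal{A}_1\|^2$, and that the solution $(U,U,W)$ of the $(1,2)$-symmetric best rank-$(2,2,2)$ approximation problem for $\mathcal{A}$ is unique; then a representative has $U=\begin{pmatrix}u_1&0\\0&u_2\end{pmatrix}$ with $u_1\in\mathbb{R}^{m_1}$, $u_2\in\mathbb{R}^{m_2}$.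
   Context: A tensor is $(1,2)$-symmetric if $\mathcal{A}(i,j,k)=\mathcal{A}(j,i,k)$. It is (1,2)-reducible if there exist nonempty proper $I\subset\{1,\dots,m\}$ and nonempty $K\subseteq\{1,\dots,n\}$ with $a_{ijk}=a_{jik}=0$ for $i\in I,j\notin I,k\in K$; 3-reducible if $a_{ijk}=0$ for $i,j\in I,k\in K$; irreducible if neither holds for any $I,K$. $(X,Y,Z)\cdot\mathcal{H}$ has entries $\sum x_{i\alpha}y_{j\beta}z_{k\gamma}h_{\alpha\beta\gamma}$; $\mathcal{A}\cdot(X,Y,Z):=(X^T,Y^T,Z^T)\cdot\mathcal{A}$; Frobenius norm. For $(1,2)$-symmetric $\mathcal{B}\in\mathbb{R}^{k\times k\times n}$, $\varphi(\mathcal{B})=\min\|\mathcal{B}-(X,X,Z)\cdot\mathcal{H}\|^2$ over $X\in\mathbb{R}^{k\times2}$, $Z\in\mathbb{R}^{n\times2}$ with orthonormal columns and $\mathcal{H}\in\mathbb{R}^{2\times2\times2}$. The $(1,2)$-symmetric best rank-$(2,2,2)$ approximation problem is $\max\|\mathcal{A}\cdot(X,X,Z)\|$ over $X^TX=I_2,Z^TZ=I_2$; solutions are equivalence classes under $(U,U,W)\mapsto(UQ_1,UQ_1,WQ_3)$ with $Q_1,Q_3$ orthogonal. *)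

From HB Require Import structures.
From mathcomp Require Import all_boot all_order all_algebra.
From mathcomp Require Import boolp classical_sets reals.
Set Implicit Arguments. Unset Strict Implicit. Unset Printing Implicit Defensive.
Import Order.TTheory GRing.Theory Num.Theory.
Local Open Scope ring_scope.
Local Open Scope classical_set_scope.

Definition tensor (R : Type) (p q r : nat) := 'I_p -> 'I_q -> 'I_r -> R.

Section Tensors.
Variable R : realType.

Definition sym12 p n (A : tensor R p p n) : Prop :=
  forall i j k, A i j k = A j i k.

Definition nonneg_tensor p q r (A : tensor R p q r) : Prop :=
  forall i j k, 0 <= A i j k.

Definition reducible12 p n (A : tensor R p p n) : Prop :=
  exists (I : {set 'I_p}) (K : {set 'I_n}),
    [/\ I != finset.set0, I != finset.setTfor 'I_p, K != finset.set0 &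
      forall i j k, i \in I -> j \notin I -> k \in K ->
        A i j k = 0 /\ A j i k = 0].

Definition reducible3 p n (A : tensor R p p n) : Prop :=
  exists (I : {set 'I_p}) (K : {set 'I_n}),
    [/\ I != finset.set0, I != finset.setTfor 'I_p, K != finset.set0 &
      forall i j k, i \in I -> j \in I -> k \in K -> A i j k = 0].

Definition irreducible p n (A : tensor R p p n) : Prop :=
  ~ reducible12 A /\ ~ reducible3 A.

Definition blk m1 m2 n (A1 : tensor R m1 m1 n) (A2 : tensor R m2 m2 n)
  : tensor R (m1 + m2) (m1 + m2) n :=
  fun i j k =>
    match split i, split j with
    | inl i', inl j' => A1 i' j' k
    | inr i', inr j' => A2 i' j' k
    | _, _ => 0
    end.

Definition tnorm p q r (A : tensor R p q r) : R :=
  Num.sqrt (\sum_(i < p) \sum_(j < q) \sum_(k < r) A i j k ^+ 2).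

Definition tmul p q r a b c (X : 'M[R]_(p, a)) (Y : 'M[R]_(q, b))
  (Z : 'M[R]_(r, c)) (H : tensor R a b c) : tensor R p q r :=
  fun i j k => \sum_(al < a) \sum_(be < b) \sum_(ga < c)
                 X i al * Y j be * Z k ga * H al be ga.

Definition tmulr p q r a b c (A : tensor R p q r) (X : 'M[R]_(p, a))
  (Y : 'M[R]_(q, b)) (Z : 'M[R]_(r, c)) : tensor R a b c :=
  tmul X^T Y^T Z^T A.

Definition tsub p q r (A B : tensor R p q r) : tensor R p q r :=
  fun i j k => A i j k - B i j k.

Definition orthonormal_cols p a (X : 'M[R]_(p, a)) : Prop := X^T *m X = 1%:M.

(* varphi(B) = min ||B - (X,X,Z).H||^2 (taken as an infimum; it is attained) *)
Definition varphi k n (B : tensor R k k n) : R :=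
  inf [set r | exists (X : 'M[R]_(k, 2)) (Z : 'M[R]_(n, 2)) (H : tensor R 2 2 2),
          [/\ orthonormal_cols X, orthonormal_cols Z &
              r = tnorm (tsub B (tmul X X Z H)) ^+ 2]].

Definition is_solution m n (A : tensor R m m n) (U : 'M[R]_(m, 2)) (W : 'M[R]_(n, 2))
  : Prop :=
  [/\ orthonormal_cols U, orthonormal_cols W &
    forall (X : 'M[R]_(m, 2)) (Z : 'M[R]_(n, 2)),
      orthonormal_cols X -> orthonormal_cols Z ->
      tnorm (tmulr A X X Z) <= tnorm (tmulr A U U W)].

Definition unique_solution m n (A : tensor R m m n) : Prop :=
  forall U W U' W', is_solution A U W -> is_solution A U' W' ->
    exists (Q1 Q3 : 'M[R]_2),
      [/\ orthonormal_cols Q1, orthonormal_cols Q3,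
          U' = U *m Q1 & W' = W *m Q3].

End Tensors.

From HB Require Import structures.
From mathcomp Require Import all_boot all_order all_algebra.
From mathcomp Require Import boolp classical_sets reals ring lra.
From mathcomp Require Import topology normedtype matrix_normedtype derive.
Import Order.TTheory GRing.Theory Num.Theory.
Import numFieldNormedType.Exports.
Local Open Scope ring_scope.
Set Implicit Arguments. Unset Strict Implicit.

(* Let D = diag(I_m1, -I_m2) ("flip").  As A is block diagonal,
   A.(DX, DX, Z) = A.(X, X, Z), so (DU, DU, W) is a solution whenever (U, U, W)
   is.  Uniqueness gives DU = U Q with Q = U^T D U orthogonal and symmetric,
   hence Q = I, Q = -I, or Q = V diag(1,-1) V^T with V orthogonal.  If Q = I
   (resp. -I), U vanishes on the second (resp. first) block and the objective
   at U only sees A1 (resp. A2), giving varphi A >= varphi A1 + |A2|^2 (resp.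
   varphi A2 + |A1|^2), against the hypotheses.  Otherwise Y = U V satisfies
   D Y = Y diag(1,-1), i.e. Y = diag(y1, y2).  For such Y the objective is
   sum_g (sum_k W_kg y1^T A1_k y1)^2 + sum_g (sum_k W_kg y2^T A2_k y2)^2;
   by Bessel's inequality and |y^T B_k y| <= |y|^T B_k |y| (B >= 0) it does not
   decrease when y_i is replaced by |y_i| and W by an orthonormal frame spanning
   the two vectors (|y_i|^T A_i,k |y_i|)_k, so diag(|y1|, |y2|) is a solution. *)

Section FrobeniusAlgebra.
Variable R : realType.

Definition sqnorm p q r (T : tensor R p q r) : R :=
  \sum_(i < p) \sum_(j < q) \sum_(k < r) T i j k ^+ 2.

Definition inner p q r (T1 T2 : tensor R p q r) : R :=
  \sum_(i < p) \sum_(j < q) \sum_(k < r) T1 i j k * T2 i j k.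

Lemma sqnorm_ge0 p q r (T : tensor R p q r) : 0 <= sqnorm T.
Proof. by do 3 (apply: sumr_ge0 => ? _); rewrite sqr_ge0. Qed.

Lemma sqnorm_ext p q r (T1 T2 : tensor R p q r) :
  (forall i j k, T1 i j k = T2 i j k) -> sqnorm T1 = sqnorm T2.
Proof. by move=> e; do 3 (apply: eq_bigr => ? _); rewrite e. Qed.

Lemma tnorm_sq p q r (T : tensor R p q r) : tnorm T ^+ 2 = sqnorm T.
Proof. by rewrite sqr_sqrtr // sqnorm_ge0. Qed.

Lemma tnorm_le p q r p' q' r' (T : tensor R p q r) (T' : tensor R p' q' r') :
  (tnorm T <= tnorm T') = (sqnorm T <= sqnorm T').
Proof. by rewrite ler_sqrt // sqnorm_ge0. Qed.

Lemma sum3_pull (I J K L : finType) (G : I -> J -> K -> L -> R) :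
  \sum_i \sum_j \sum_k \sum_l G i j k l = \sum_l \sum_i \sum_j \sum_k G i j k l.
Proof.
under eq_bigr do under eq_bigr do rewrite exchange_big /=.
under eq_bigr do rewrite exchange_big /=.
by rewrite exchange_big.
Qed.

Lemma sum3_swap (I J K A B C : finType) (G : I -> J -> K -> A -> B -> C -> R) :
  \sum_i \sum_j \sum_k \sum_a \sum_b \sum_c G i j k a b c =
  \sum_a \sum_b \sum_c \sum_i \sum_j \sum_k G i j k a b c.
Proof.
rewrite [LHS]sum3_pull; apply: eq_bigr => a _.
rewrite [LHS]sum3_pull; apply: eq_bigr => b _.
exact: sum3_pull.
Qed.

Lemma sum3_mul (A B C : finType) (f : A -> R) (g : B -> R) (h : C -> R) d :
  (\sum_a f a) * (\sum_b g b) * (\sum_c h c) * d =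
  \sum_a \sum_b \sum_c (f a * g b * h c * d).
Proof.
rewrite !mulr_suml; apply: eq_bigr => a _.
rewrite [f a * _]mulr_sumr !mulr_suml; apply: eq_bigr => b _.
rewrite [f a * g b * _]mulr_sumr !mulr_suml; apply: eq_bigr => c _; ring.
Qed.

Lemma orthonormal_colsE p a (X : 'M[R]_(p, a)) al be :
  orthonormal_cols X -> \sum_i X i al * X i be = (al == be)%:R.
Proof.
move=> /matrixP/(_ al be); rewrite !mxE => <-.
by apply: eq_bigr => i _; rewrite mxE.
Qed.

Lemma isometry_cols p a (X : 'M[R]_(p, a)) (v : 'I_a -> R) :
  orthonormal_cols X -> \sum_i (\sum_al X i al * v al) ^+ 2 = \sum_al v al ^+ 2.
Proof.
move=> oX; have sqr_sum (F : 'I_a -> R) : (\sum_al F al) ^+ 2 = \sum_al \sum_be F al * F be.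
  by rewrite expr2 mulr_suml; apply: eq_bigr => al _; rewrite mulr_sumr.
under eq_bigr do rewrite sqr_sum.
rewrite exchange_big /=; apply: eq_bigr => al _.
rewrite exchange_big /= (bigD1 al) //= [X in _ + X]big1 ?addr0 => [|be nbe].
  transitivity (v al ^+ 2 * \sum_i X i al * X i al).
    by rewrite mulr_sumr; apply: eq_bigr => i _; rewrite expr2; ring.
  by rewrite orthonormal_colsE // eqxx mulr1.
transitivity (v al * v be * \sum_i X i al * X i be).
  by rewrite mulr_sumr; apply: eq_bigr => i _; ring.
by rewrite orthonormal_colsE // eq_sym (negbTE nbe) mulr0.
Qed.

Lemma tmul_nested p q r a b c (X : 'M[R]_(p, a)) (Y : 'M[R]_(q, b))
  (Z : 'M[R]_(r, c)) (H : tensor R a b c) i j k :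
  tmul X Y Z H i j k =
  \sum_al X i al * \sum_be Y j be * \sum_ga Z k ga * H al be ga.
Proof.
apply: eq_bigr => al _; rewrite mulr_sumr; apply: eq_bigr => be _.
rewrite !mulr_sumr; apply: eq_bigr => ga _; ring.
Qed.

Lemma sqnorm_tmul p q r a b c (X : 'M[R]_(p, a)) (Y : 'M[R]_(q, b))
  (Z : 'M[R]_(r, c)) (H : tensor R a b c) :
  orthonormal_cols X -> orthonormal_cols Y -> orthonormal_cols Z ->
  sqnorm (tmul X Y Z H) = sqnorm H.
Proof.
move=> oX oY oZ; rewrite /sqnorm.
under eq_bigr do under eq_bigr do under eq_bigr do rewrite tmul_nested.
rewrite exchange_big /=.
under eq_bigr do rewrite exchange_big /=.
under eq_bigr do under eq_bigr do rewrite isometry_cols //.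
under eq_bigr do rewrite exchange_big /=.
rewrite exchange_big /=; apply: eq_bigr => al _.
rewrite exchange_big /=.
under eq_bigr do rewrite isometry_cols //.
rewrite exchange_big /=; apply: eq_bigr => be _.
exact: (isometry_cols (fun ga => H al be ga) oZ).
Qed.

Lemma inner_tmul p q r a b c (B : tensor R p q r) (X : 'M[R]_(p, a))
  (Y : 'M[R]_(q, b)) (Z : 'M[R]_(r, c)) (H : tensor R a b c) :
  inner B (tmul X Y Z H) = inner (tmulr B X Y Z) H.
Proof.
transitivity (\sum_i \sum_j \sum_k \sum_al \sum_be \sum_ga
   (X i al * Y j be * Z k ga * B i j k * H al be ga)).
  do 3 (apply: eq_bigr => ? _); rewrite mulr_sumr; apply: eq_bigr => al _.
  rewrite mulr_sumr; apply: eq_bigr => be _.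
  rewrite mulr_sumr; apply: eq_bigr => ga _; ring.
rewrite sum3_swap; do 3 (apply: eq_bigr => ? _).
rewrite !mulr_suml; apply: eq_bigr => i _.
rewrite !mulr_suml; apply: eq_bigr => j _.
rewrite !mulr_suml; apply: eq_bigr => k _.
rewrite !mxE; ring.
Qed.

Lemma sqnorm_sub p q r (T1 T2 : tensor R p q r) :
  sqnorm (tsub T1 T2) = sqnorm T1 - 2 * inner T1 T2 + sqnorm T2.
Proof.
rewrite /sqnorm /inner /tsub mulr_sumr -sumrB -big_split /=; apply: eq_bigr => i _.
rewrite mulr_sumr -sumrB -big_split /=; apply: eq_bigr => j _.
rewrite mulr_sumr -sumrB -big_split /=; apply: eq_bigr => k _.
ring.
Qed.

(* Pythagorean identity behind varphi: the approximation error splits into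
   |B|^2 - |B.(X,X,Z)|^2 plus the distance of the core H to B.(X,X,Z). *)
Lemma sqnorm_approx k n (B : tensor R k k n) (X : 'M[R]_(k, 2))
  (Z : 'M[R]_(n, 2)) (H : tensor R 2 2 2) :
  orthonormal_cols X -> orthonormal_cols Z ->
  sqnorm (tsub B (tmul X X Z H)) =
  sqnorm B - sqnorm (tmulr B X X Z) + sqnorm (tsub H (tmulr B X X Z)).
Proof.
move=> oX oZ; rewrite sqnorm_sub sqnorm_tmul // inner_tmul sqnorm_sub.
suff -> : inner H (tmulr B X X Z) = inner (tmulr B X X Z) H by ring.
by do 3 (apply: eq_bigr => ? _); exact: mulrC.
Qed.

(* varphi(B) is |B|^2 minus the maximal value of |B.(X,X,Z)|^2:
   the two inequalities below. *)
Lemma varphi_le k n (B : tensor R k k n) (X : 'M[R]_(k, 2)) (Z : 'M[R]_(n, 2)) :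
  orthonormal_cols X -> orthonormal_cols Z ->
  varphi B <= sqnorm B - sqnorm (tmulr B X X Z).
Proof.
move=> oX oZ.
have -> : sqnorm B - sqnorm (tmulr B X X Z) =
          tnorm (tsub B (tmul X X Z (tmulr B X X Z))) ^+ 2.
  rewrite tnorm_sq sqnorm_approx //.
  suff -> : sqnorm (tsub (tmulr B X X Z) (tmulr B X X Z)) = 0 by rewrite addr0.
  rewrite /sqnorm big1 // => i _; rewrite big1 // => j _; rewrite big1 // => l _.
  by rewrite /tsub subrr expr0n.
apply: ge_inf; last by exists X, Z, (tmulr B X X Z).
by exists 0 => y [X' [Z' [H' [_ _ ->]]]]; rewrite sqr_ge0.
Qed.

Lemma varphi_ge k n (B : tensor R k k n) (c : R) (X0 : 'M[R]_(k, 2)) (Z0 : 'M[R]_(n, 2)) :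
  orthonormal_cols X0 -> orthonormal_cols Z0 ->
  (forall (X : 'M[R]_(k, 2)) (Z : 'M[R]_(n, 2)),
     orthonormal_cols X -> orthonormal_cols Z ->
     c <= sqnorm B - sqnorm (tmulr B X X Z)) ->
  c <= varphi B.
Proof.
move=> oX0 oZ0 h; apply: lb_le_inf.
  by exists (tnorm (tsub B (tmul X0 X0 Z0 (fun _ _ _ => 0))) ^+ 2), X0, Z0, (fun _ _ _ => 0).
move=> y [X [Z [H [oX oZ ->]]]]; rewrite tnorm_sq sqnorm_approx //.
by apply: le_trans (h X Z oX oZ) _; rewrite lerDl sqnorm_ge0.
Qed.

Lemma is_solution_max m n (B : tensor R m m n) (U : 'M[R]_(m, 2)) (W : 'M[R]_(n, 2))
  (X : 'M[R]_(m, 2)) (Z : 'M[R]_(n, 2)) :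
  is_solution B U W -> orthonormal_cols X -> orthonormal_cols Z ->
  sqnorm (tmulr B X X Z) <= sqnorm (tmulr B U U W).
Proof. by case=> _ _ h oX oZ; rewrite -tnorm_le; exact: h. Qed.

Lemma varphi_ge_compress m p n (B : tensor R m m n) (C : tensor R p p n)
  (U : 'M[R]_(m, 2)) (W : 'M[R]_(n, 2)) (U1 : 'M[R]_(p, 2)) :
  is_solution B U W -> orthonormal_cols U1 ->
  (forall a b c, tmulr B U U W a b c = tmulr C U1 U1 W a b c) ->
  varphi C + (sqnorm B - sqnorm C) <= varphi B.
Proof.
move=> sol oU1 eqT; have [oU oW _] := sol.
apply: (varphi_ge oU oW) => X Z oX oZ.
have := is_solution_max sol oX oZ; rewrite (sqnorm_ext eqT).
have := varphi_le C oU1 oW; lra.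
Qed.

Lemma tmulr_mulmx p q r a b c a' b' c' (A : tensor R p q r)
  (X : 'M[R]_(p, a)) (Y : 'M[R]_(q, b)) (Z : 'M[R]_(r, c))
  (Q1 : 'M[R]_(a, a')) (Q2 : 'M[R]_(b, b')) (Q3 : 'M[R]_(c, c')) al be ga :
  tmulr A (X *m Q1) (Y *m Q2) (Z *m Q3) al be ga =
  tmul Q1^T Q2^T Q3^T (tmulr A X Y Z) al be ga.
Proof.
transitivity (\sum_i \sum_j \sum_k \sum_x \sum_y \sum_z
  (X i x * Q1 x al * (Y j y * Q2 y be) * (Z k z * Q3 z ga) * A i j k)).
  by do 3 (apply: eq_bigr => ? _); rewrite !mxE sum3_mul.
rewrite sum3_swap; do 3 (apply: eq_bigr => ? _).
rewrite !mxE mulr_sumr; apply: eq_bigr => i _.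
rewrite mulr_sumr; apply: eq_bigr => j _.
rewrite mulr_sumr; apply: eq_bigr => k _.
rewrite !mxE; ring.
Qed.

Lemma orthonormal_tr a (Q : 'M[R]_a) : orthonormal_cols Q -> orthonormal_cols Q^T.
Proof. by rewrite /orthonormal_cols trmxK => /mulmx1C. Qed.

Lemma orthonormal_mul p a b (U : 'M[R]_(p, a)) (V : 'M[R]_(a, b)) :
  orthonormal_cols U -> orthonormal_cols V -> orthonormal_cols (U *m V).
Proof.
rewrite /orthonormal_cols => oU oV.
by rewrite trmx_mul mulmxA -(mulmxA V^T) oU mulmx1 oV.
Qed.

Lemma is_solution_rot m n (B : tensor R m m n) (U : 'M[R]_(m, 2)) (W : 'M[R]_(n, 2))
  (Q : 'M[R]_2) :
  orthonormal_cols Q -> is_solution B U W -> is_solution B (U *m Q) W.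
Proof.
move=> oQ sol; have [oU oW _] := sol.
have oQT := orthonormal_tr oQ.
have o1T : orthonormal_cols (1%:M : 'M[R]_2)^T by rewrite /orthonormal_cols trmxK trmx1 mulmx1.
split; [exact: orthonormal_mul | done | move=> X Z oX oZ].
rewrite tnorm_le -[in X in _ <= X](mulmx1 W) (sqnorm_ext (tmulr_mulmx B U U W Q Q 1%:M)).
by rewrite sqnorm_tmul //; exact: is_solution_max.
Qed.

End FrobeniusAlgebra.

Notation o0 := (@ord0 1).
Notation o1 := (@ord_max 1).

Lemma ord2P (i : 'I_2) : i = o0 \/ i = o1.
Proof. by case: i => [[|[|//]] Hi]; [left|right]; apply/val_inj. Qed.

Lemma sum_I2 (R : realType) (F : 'I_2 -> R) : \sum_(i < 2) F i = F o0 + F o1.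
Proof.
by rewrite big_ord_recl big_ord_recl big_ord0 addr0; congr (_ + F _); exact/val_inj.
Qed.

Section Frames.
Variables (R : realType) (n : nat).
Hypothesis n_ge2 : (2 <= n)%N.
Implicit Types u v w : 'I_n -> R.

Definition dot u v := \sum_k u k * v k.

Lemma dotC u v : dot u v = dot v u.
Proof. by apply: eq_bigr => k _; rewrite mulrC. Qed.

Lemma dot_ge0 u : 0 <= dot u u.
Proof. by apply: sumr_ge0 => k _; rewrite -expr2 sqr_ge0. Qed.

Lemma dot_eq0 u : dot u u = 0 -> forall k, u k = 0.
Proof.
move=> /eqP; rewrite psumr_eq0 => [/allP uu k|k _]; last by rewrite -expr2 sqr_ge0.
by apply/eqP; rewrite -sqrf_eq0 expr2; exact: implyP (uu k (mem_index_enum k)) isT.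
Qed.

Lemma normalize v : 0 < dot v v ->
  exists u, [/\ dot u u = 1, forall w, dot u w = dot v w / Num.sqrt (dot v v) &
    forall k, v k = Num.sqrt (dot v v) * u k].
Proof.
move=> v_gt0; set s := Num.sqrt (dot v v).
have s2 : s ^+ 2 = dot v v by rewrite sqr_sqrtr // ltW.
have s0 : s != 0 by rewrite sqrtr_eq0 -ltNge.
exists (fun k => v k / s); split.
- transitivity (dot v v / s ^+ 2); last by rewrite s2 divff // gt_eqF.
  by rewrite /dot mulr_suml; apply: eq_bigr => k _; field.
- by move=> w; rewrite /dot mulr_suml; apply: eq_bigr => k _; field.
- by move=> k; field.
Qed.

(* In dimension n >= 2 every unit vector has a unit vector orthogonal to it:
   for some basis vector e_i, e_i - w_i w is a nonzero vector orthogonal to w. *)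
Lemma unit_orthogonal w : dot w w = 1 -> exists u, dot u u = 1 /\ dot u w = 0.
Proof.
move=> w1; pose i0 : 'I_n := Ordinal (ltnW n_ge2); pose i1 : 'I_n := Ordinal n_ge2.
pose r (i : 'I_n) k := (k == i)%:R - w i * w k.
have sum_delta i (f : 'I_n -> R) : \sum_k (k == i)%:R * f k = f i.
  rewrite (bigD1 i) //= eqxx mul1r big1 ?addr0 // => k /negbTE ->; exact: mul0r.
have r_ortho i : dot (r i) w = 0.
  have -> : dot (r i) w = \sum_k (k == i)%:R * w k - w i * dot w w.
    by rewrite /dot mulr_sumr -sumrB; apply: eq_bigr => k _; rewrite /r; ring.
  by rewrite w1 sum_delta mulr1 subrr.
have r_norm i : dot (r i) (r i) = 1 - w i ^+ 2.
  have -> : dot (r i) (r i) = \sum_k (k == i)%:R * 1 - 2 * w i * \sum_k (k == i)%:R * w k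
      + w i ^+ 2 * dot w w.
    rewrite /dot mulr_sumr [X in _ = _ + X]mulr_sumr -sumrB -big_split /=.
    by apply: eq_bigr => k _; rewrite /r; case: eqP => _; rewrite ?mulr1n ?mulr0n; ring.
  by rewrite w1 !sum_delta; ring.
have two_coords : w i0 ^+ 2 + w i1 ^+ 2 <= 1.
  rewrite -w1 /dot (bigD1 i0) //= (bigD1 i1) //= addrA !expr2 lerDl.
  by apply: sumr_ge0 => k _; rewrite -expr2 sqr_ge0.
have [i r_pos] : exists i, 0 < dot (r i) (r i).
  case: (ltP 0 (1 - w i0 ^+ 2)) => h; first by exists i0; rewrite r_norm.
  by exists i1; rewrite r_norm; lra.
have [u [uu uw _]] := normalize r_pos.
by exists u; rewrite uu uw r_ortho mul0r.
Qed.

Lemma unit_direction v : exists u, dot u u = 1 /\ exists t, forall k, v k = t * u k.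
Proof.
pose e : 'I_n -> R := fun k => (k == Ordinal n_ge2)%:R.
have e1 : dot e e = 1.
  rewrite /dot (bigD1 (Ordinal n_ge2)) //= /e eqxx mulr1 big1 ?addr0 // => k /negbTE ->.
  exact: mul0r.
have [v_pos|] := ltP 0 (dot v v).
  by have [u [uu _ vu]] := normalize v_pos; exists u; split => //; exists (Num.sqrt (dot v v)).
move=> v_le0; have v0 : dot v v = 0 by apply/eqP; rewrite eq_le v_le0 dot_ge0.
by exists e; split => //; exists 0 => k; rewrite mul0r (dot_eq0 v0).
Qed.

Lemma unit_direction_orthogonal w v : dot w w = 1 -> dot v w = 0 ->
  exists u, [/\ dot u u = 1, dot u w = 0 & exists t, forall k, v k = t * u k].
Proof.
move=> w1 vw; have [v_pos|] := ltP 0 (dot v v).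
  have [u [uu uw vu]] := normalize v_pos.
  by exists u; split => //; [rewrite uw vw mul0r | exists (Num.sqrt (dot v v))].
move=> v_le0; have v0 : dot v v = 0 by apply/eqP; rewrite eq_le v_le0 dot_ge0.
have [u [uu uw]] := unit_orthogonal w1.
by exists u; split => //; exists 0 => k; rewrite mul0r (dot_eq0 v0).
Qed.

Definition frame2 w1 w2 : 'M[R]_(n, 2) := \matrix_(k, j) (if j == o0 then w1 k else w2 k).

Lemma frame2_orthonormal w1 w2 :
  dot w1 w1 = 1 -> dot w2 w1 = 0 -> dot w2 w2 = 1 -> orthonormal_cols (frame2 w1 w2).
Proof.
move=> h11 h21 h22; apply/matrixP => i j; rewrite !mxE.
transitivity (dot (if i == o0 then w1 else w2) (if j == o0 then w1 else w2)).
  by apply: eq_bigr => k _; rewrite !mxE; case: (i == o0); case: (j == o0).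
case: (ord2P i) => ->; case: (ord2P j) => -> /=; rewrite ?mulr1n ?mulr0n //.
by rewrite dotC.
Qed.

Lemma orthonormal_frame_spanning (a b : 'I_n -> R) :
  exists W : 'M[R]_(n, 2), [/\ orthonormal_cols W,
    exists ta : 'I_2 -> R, forall k, a k = \sum_de W k de * ta de &
    exists tb : 'I_2 -> R, forall k, b k = \sum_de W k de * tb de].
Proof.
have [w1 [w11 [t1 a_w1]]] := unit_direction a.
pose r k := b k - dot b w1 * w1 k.
have r_w1 : dot r w1 = 0.
  have -> : dot r w1 = dot b w1 - dot b w1 * dot w1 w1.
    by rewrite /dot mulr_sumr -sumrB; apply: eq_bigr => k _; rewrite /r /dot; ring.
  by rewrite w11 mulr1 subrr.
have [w2 [w22 w21 [t2 r_w2]]] := unit_direction_orthogonal w11 r_w1.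
have frameE k t : \sum_de frame2 w1 w2 k de * t de = w1 k * t o0 + w2 k * t o1.
  by rewrite sum_I2 !mxE.
exists (frame2 w1 w2); split; first exact: frame2_orthonormal.
- by exists (fun de => if de == o0 then t1 else 0) => k; rewrite frameE /= a_w1; ring.
- exists (fun de => if de == o0 then dot b w1 else t2) => k.
  by rewrite frameE /= -[b k](subrK (dot b w1 * w1 k)) -/(r k) r_w2; ring.
Qed.

Lemma exists_orthonormal : exists W : 'M[R]_(n, 2), orthonormal_cols W.
Proof. by have [W [oW _ _]] := orthonormal_frame_spanning (fun=> 0) (fun=> 0); exists W. Qed.

Lemma bessel a (W : 'M[R]_(n, a)) (v : 'I_n -> R) :
  orthonormal_cols W -> \sum_ga (\sum_k W k ga * v k) ^+ 2 <= \sum_k v k ^+ 2.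
Proof.
move=> oW; set s := fun ga => \sum_k W k ga * v k.
have rest_ge0 : 0 <= \sum_k (v k - \sum_ga W k ga * s ga) ^+ 2.
  by apply: sumr_ge0 => k _; rewrite sqr_ge0.
have expand : \sum_k (v k - \sum_ga W k ga * s ga) ^+ 2 =
   \sum_k v k ^+ 2 - 2 * \sum_k v k * (\sum_ga W k ga * s ga) +
   \sum_k (\sum_ga W k ga * s ga) ^+ 2.
  by rewrite mulr_sumr -sumrB -big_split /=; apply: eq_bigr => k _; ring.
have cross : \sum_k v k * (\sum_ga W k ga * s ga) = \sum_ga s ga ^+ 2.
  under eq_bigr do rewrite mulr_sumr.
  rewrite exchange_big /=; apply: eq_bigr => ga _.
  by rewrite expr2 [X in _ = X * _]/s mulr_suml; apply: eq_bigr => k _; ring.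
by move: rest_ge0; rewrite expand cross (isometry_cols s oW) -/s; lra.
Qed.

Lemma bessel_span a (W : 'M[R]_(n, a)) (t : 'I_a -> R) :
  orthonormal_cols W ->
  \sum_ga (\sum_k W k ga * (\sum_de W k de * t de)) ^+ 2 =
  \sum_k (\sum_de W k de * t de) ^+ 2.
Proof.
move=> oW; rewrite (isometry_cols t oW); apply: eq_bigr => ga _; congr (_ ^+ 2).
under eq_bigr do rewrite mulr_sumr.
rewrite exchange_big /= (bigD1 ga) //= [X in _ + X]big1 ?addr0 => [|de nde].
  transitivity (t ga * \sum_k W k ga * W k ga).
    by rewrite mulr_sumr; apply: eq_bigr => k _; ring.
  by rewrite orthonormal_colsE // eqxx mulr1.
transitivity (t de * \sum_k W k ga * W k de).
  by rewrite mulr_sumr; apply: eq_bigr => k _; ring.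
by rewrite orthonormal_colsE // eq_sym (negbTE nde) mulr0.
Qed.

End Frames.

Section Existence.
Variables (R : realType) (m n : nat).
Local Open Scope classical_set_scope.

(* A pair (X, Z) of m x 2 and n x 2 matrices is encoded as one row vector. *)
Local Notation N := (m * 2 + n * 2)%N.

Lemma continuous_sum (I : Type) (r : seq I) (P : pred I) (F : I -> 'rV[R]_N -> R) :
  (forall i, continuous (F i)) -> continuous (fun v => \sum_(i <- r | P i) F i v).
Proof.
move=> cF; elim: r => [|a r IH].
  by under eq_fun do rewrite big_nil; exact: cst_continuous.
under eq_fun do rewrite big_cons; case: (P a) => //.
by move=> v; apply: continuousD; [exact: cF | exact: IH].
Qed.

Lemma continuous_mul (f g : 'rV[R]_N -> R) :
  continuous f -> continuous g -> continuous (fun v => f v * g v).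
Proof. by move=> cf cg v; exact: (continuousM (cf v) (cg v)). Qed.

Definition Xof (v : 'rV[R]_N) : 'M[R]_(m, 2) :=
  \matrix_(i, j) v ord0 (lshift (n * 2) (mxvec_index i j)).
Definition Zof (v : 'rV[R]_N) : 'M[R]_(n, 2) :=
  \matrix_(i, j) v ord0 (rshift (m * 2) (mxvec_index i j)).
Definition encode (X : 'M[R]_(m, 2)) (Z : 'M[R]_(n, 2)) : 'rV[R]_N :=
  row_mx (mxvec X) (mxvec Z).

Lemma XofK X Z : Xof (encode X Z) = X.
Proof. by apply/matrixP => i j; rewrite mxE row_mxEl mxvecE. Qed.
Lemma ZofK X Z : Zof (encode X Z) = Z.
Proof. by apply/matrixP => i j; rewrite mxE row_mxEr mxvecE. Qed.

Definition stiefel2 : set 'rV[R]_N :=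
  [set v | orthonormal_cols (Xof v) /\ orthonormal_cols (Zof v)].

Lemma orthonormal_entry_le1 p (X : 'M[R]_(p, 2)) i j : orthonormal_cols X -> `|X i j| <= 1.
Proof.
move=> oX; have col1 : \sum_k X k j * X k j = 1 by rewrite orthonormal_colsE // eqxx.
rewrite -(ler_pXn2r (n := 2)) ?nnegrE ?normr_ge0 // expr1n real_normK ?num_real //.
rewrite -col1 (bigD1 i) //= expr2 lerDl; apply: sumr_ge0 => k _.
by rewrite -expr2 sqr_ge0.
Qed.

Lemma stiefel2_bounded : bounded_set stiefel2.
Proof.
exists 1; split; first by rewrite num_real.
move=> r r1 v [oX oZ] /=; apply: le_trans (ltW r1).
rewrite [leLHS]mx_normrE; apply/bigmax_leP; split => // ij _.
rewrite (ord1 ij.1); case: (split_ordP ij.2) => k ->; case/mxvec_indexP: k => i j.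
  by have := orthonormal_entry_le1 i j oX; rewrite mxE.
by have := orthonormal_entry_le1 i j oZ; rewrite mxE.
Qed.

Definition gram_entry (t : 'I_2 * 'I_2 * bool) (v : 'rV[R]_N) : R :=
  if t.2 then ((Zof v)^T *m Zof v) t.1.1 t.1.2 else ((Xof v)^T *m Xof v) t.1.1 t.1.2.

Lemma gram_entry_continuous t : continuous (gram_entry t).
Proof.
rewrite /gram_entry; case: t.2 => /=; under eq_fun do rewrite mxE;
  apply: continuous_sum => i; under eq_fun do rewrite !mxE;
  by apply: continuous_mul; exact: coord_continuous.
Qed.

Lemma stiefel2_closed : closed stiefel2.
Proof.
have -> : stiefel2 = \bigcap_(t in [set: 'I_2 * 'I_2 * bool])
   (gram_entry t @^-1` [set (1%:M : 'M[R]_2) t.1.1 t.1.2]).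
  apply/seteqP; split => [v [oX oZ] [[a b] c] _|v h]; rewrite /gram_entry /=.
    by case: c; [rewrite oZ | rewrite oX].
  by split; apply/matrixP => a b; [have := h (a, b, false) I | have := h (a, b, true) I].
apply: closed_bigI => t _; apply: closed_comp; last exact: closed_eq.
by move=> v _; exact: gram_entry_continuous.
Qed.

(* The best rank-(2,2,2) approximation problem has a solution (n, m >= 2 make
   the constraint set nonempty). *)
Lemma exists_solution (B : tensor R m m n) :
  (2 <= m)%N -> (2 <= n)%N -> exists U W, is_solution B U W.
Proof.
move=> m_ge2 n_ge2.
pose g (v : 'rV[R]_N) := sqnorm (tmulr B (Xof v) (Xof v) (Zof v)).
have g_cont : continuous g.
  rewrite /g /sqnorm; do 3 (apply: continuous_sum => ?).
  under eq_fun do rewrite expr2; apply: continuous_mul;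
  do 3 (apply: continuous_sum => ?); under eq_fun do rewrite !mxE;
  by apply: continuous_mul; [do 2 (apply: continuous_mul; last exact: coord_continuous);
     exact: coord_continuous | exact: cst_continuous].
have [X0 oX0] := exists_orthonormal R m_ge2.
have [Z0 oZ0] := exists_orthonormal R n_ge2.
have S0 : stiefel2 !=set0 by exists (encode X0 Z0); split; rewrite ?XofK ?ZofK.
have [c /set_mem [oXc oZc] c_max] := compact_EVT_max S0
  (bounded_closed_compact stiefel2_bounded stiefel2_closed) (continuous_subspaceT g_cont).
exists (Xof c), (Zof c); split => // X Z oX oZ; rewrite tnorm_le.
have := c_max (encode X Z); rewrite /g XofK ZofK; apply.
by apply/mem_set; split; rewrite ?XofK ?ZofK.
Qed.

End Existence.

Section TwoByTwo.
Variable R : realType.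

Lemma mx2_eq (A B : 'M[R]_2) :
  A o0 o0 = B o0 o0 -> A o0 o1 = B o0 o1 -> A o1 o0 = B o1 o0 -> A o1 o1 = B o1 o1 ->
  A = B.
Proof.
move=> e00 e01 e10 e11; apply/matrixP => i j.
by case: (ord2P i) => ->; case: (ord2P j) => ->.
Qed.

Definition mk2 (x y z w : R) : 'M[R]_2 :=
  \matrix_(i, j) if i == o0 then (if j == o0 then x else y)
                 else (if j == o0 then z else w).

Lemma mk2E x y z w :
  [/\ mk2 x y z w o0 o0 = x, mk2 x y z w o0 o1 = y,
      mk2 x y z w o1 o0 = z & mk2 x y z w o1 o1 = w].
Proof. by rewrite !mxE. Qed.

Lemma mulmx2E p q (A : 'M[R]_(p, 2)) (B : 'M[R]_(2, q)) i j :
  (A *m B) i j = A i o0 * B o0 j + A i o1 * B o1 j.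
Proof. by rewrite mxE sum_I2. Qed.

Definition refl2 : 'M[R]_2 := mk2 1 0 0 (-1).

Lemma refl2_block : (refl2 : 'M[R]_(1 + 1)) = block_mx 1%:M 0 0 (- 1%:M).
Proof.
apply/matrixP => i j; case: (split_ordP i) => i' ->; case: (split_ordP j) => j' ->;
  by rewrite ?block_mxEul ?block_mxEur ?block_mxEdl ?block_mxEdr !mxE !ord1.
Qed.

Lemma orthonormal2E (V : 'M[R]_2) :
  orthonormal_cols V <->
  [/\ V o0 o0 * V o0 o0 + V o1 o0 * V o1 o0 = 1,
      V o0 o0 * V o0 o1 + V o1 o0 * V o1 o1 = 0 &
      V o0 o1 * V o0 o1 + V o1 o1 * V o1 o1 = 1].
Proof.
rewrite /orthonormal_cols; split => [oV|[e00 e01 e11]].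
  have entry i j : (V^T *m V) i j = (1%:M : 'M[R]_2) i j by rewrite oV.
  by have := entry o0 o0; have := entry o0 o1; have := entry o1 o1;
    rewrite !mulmx2E !mxE.
apply: mx2_eq; rewrite !mulmx2E !mxE //=.
by rewrite [X in X + _]mulrC [X in _ + X]mulrC.
Qed.

(* Half-angle formulas: a point (a, b) of the unit circle is the "square"
   of another point (c, s) of the unit circle. *)
Lemma half_angle (a b : R) : a * a + b * b = 1 ->
  exists c s : R, [/\ c * c + s * s = 1, a = c * c - s * s & b = 2 * c * s].
Proof.
move=> ab1; have [a_m1|a_neq] := eqVneq a (-1).
  have b0 : b = 0 by apply/eqP; rewrite -sqrf_eq0 expr2; apply/eqP; nra.
  by exists 0, 1; split; rewrite ?a_m1 ?b0; ring.
have pos : 0 < 1 + a.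
  have : -1 <= a by nra.
  by rewrite le_eqVlt eq_sym (negbTE a_neq) /=; lra.
set c := Num.sqrt ((1 + a) / 2).
have c2 : c * c = (1 + a) / 2 by rewrite -expr2 sqr_sqrtr // divr_ge0 // ltW.
have c0 : c != 0 by rewrite sqrtr_eq0 -ltNge divr_gt0.
exists c, (b / (2 * c)).
have s2 : b / (2 * c) * (b / (2 * c)) = (1 - a) / 2.
  have -> : b / (2 * c) * (b / (2 * c)) = b * b / (4 * (c * c)) by field.
  rewrite c2 (_ : b * b = (1 - a) * (1 + a)); last by nra.
  by field; rewrite gt_eqF.
by split; rewrite ?s2 ?c2; [field | field | field].
Qed.

(* The reflection [[a, b], [b, -a]] is conjugate to diag(1, -1): with (c, s)
   the half angle, V = [[c, -s], [s, c]] is a rotation with Q V = V diag(1,-1). *)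
Lemma reflection_diagonalize (a b : R) : a * a + b * b = 1 ->
  exists V, orthonormal_cols V /\ mk2 a b b (- a) *m V = V *m refl2.
Proof.
move=> ab1; have [c [s [cs1 a_eq b_eq]]] := half_angle ab1.
exists (mk2 c (- s) s c); split.
  by apply/orthonormal2E; case: (mk2E c (- s) s c) => -> -> -> ->; split; nra.
have on_circle k x y : x - y = k * (c * c + s * s - 1) -> x = y.
  by rewrite cs1 subrr mulr0 => /eqP; rewrite subr_eq0 => /eqP.
case: (mk2E a b b (- a)) (mk2E c (- s) s c) (mk2E 1 0 0 (-1 : R))
  => q00 q01 q10 q11 [v00 v01 v10 v11] [f00 f01 f10 f11].
apply: mx2_eq; rewrite !mulmx2E /refl2 ?q00 ?q01 ?q10 ?q11 ?v00 ?v01 ?v10 ?v11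
  ?f00 ?f01 ?f10 ?f11 a_eq b_eq;
  [apply: (on_circle c) | apply: (on_circle s) | apply: (on_circle s)
  | apply: (on_circle (- c))]; ring.
Qed.

(* A symmetric orthogonal 2 x 2 matrix is I, -I (nonzero trace), or a
   reflection conjugate to diag(1, -1) by an orthogonal matrix (zero trace). *)
Lemma sym_orthogonal2 (Q : 'M[R]_2) :
  orthonormal_cols Q -> Q^T = Q ->
  [\/ Q = 1%:M, Q = - 1%:M | exists V, orthonormal_cols V /\ Q *m V = V *m refl2].
Proof.
move=> /orthonormal2E [e00 e01 e11] /matrixP /(_ o0 o1); rewrite mxE => sym.
set a := Q o0 o0 in e00 e01; set d := Q o1 o1 in e01 e11; set b := Q o1 o0 in sym e00 e01.
rewrite -sym in e01 e11.
have [q00 q01 q10 q11] : [/\ Q o0 o0 = a, Q o0 o1 = b, Q o1 o0 = b & Q o1 o1 = d] by [].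
have [tr0|tr_neq0] := eqVneq (a + d) 0.
  have -> : Q = mk2 a b b (- a).
    case: (mk2E a b b (- a)) => m00 m01 m10 m11.
    by apply: mx2_eq; rewrite ?m00 ?m01 ?m10 ?m11 //; lra.
  by apply: Or33; exact: reflection_diagonalize.
have b0 : b = 0.
  have /eqP : b * (a + d) = 0 by rewrite -e01; ring.
  by rewrite mulf_eq0 (negbTE tr_neq0) orbF => /eqP.
have d_eq : d = a.
  have /eqP : (a - d) * (a + d) = 0 by nra.
  by rewrite mulf_eq0 (negbTE tr_neq0) orbF subr_eq0 => /eqP.
have /eqP : a ^+ 2 = 1 by rewrite expr2 -e00 b0; ring.
rewrite sqrf_eq1 => /orP[] /eqP a_eq; [apply: Or31 | apply: Or32];
  by apply: mx2_eq; rewrite !mxE /= ?q00 ?q01 ?q10 ?q11 ?d_eq ?a_eq ?b0 ?oppr0.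
Qed.

End TwoByTwo.

Arguments refl2 {R}.

Section Bilinear.
Variable R : realType.

Lemma mx_eq_opp p q (M : 'M[R]_(p, q)) : M = - M -> M = 0.
Proof. by move=> /matrixP eqM; apply/matrixP => i j; move: (eqM i j); rewrite !mxE; lra. Qed.

Lemma col_opp p a (M : 'M[R]_(p, a)) j : col j (- M) = - col j M.
Proof. by apply/matrixP => i k; rewrite !mxE. Qed.

Definition bil p n (B : tensor R p p n) (x y : 'cV[R]_p) (k : 'I_n) : R :=
  \sum_i \sum_j x i 0 * y j 0 * B i j k.

Lemma tmulr_bil p r a b c (B : tensor R p p r) (X : 'M[R]_(p, a)) (Y : 'M[R]_(p, b))
  (Z : 'M[R]_(r, c)) al be ga :
  tmulr B X Y Z al be ga = \sum_k Z k ga * bil B (col al X) (col be Y) k.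
Proof.
rewrite /tmulr /tmul; under eq_bigr do rewrite exchange_big /=.
rewrite exchange_big /=; apply: eq_bigr => k _.
rewrite mulr_sumr; apply: eq_bigr => i _; rewrite mulr_sumr; apply: eq_bigr => j _.
rewrite !mxE; ring.
Qed.

Lemma bil0l p n (B : tensor R p p n) y k : bil B 0 y k = 0.
Proof. by rewrite /bil big1 // => i _; rewrite big1 // => j _; rewrite mxE !mul0r. Qed.

Lemma bil0r p n (B : tensor R p p n) x k : bil B x 0 k = 0.
Proof. by rewrite /bil big1 // => i _; rewrite big1 // => j _; rewrite mxE mulr0 mul0r. Qed.

Lemma bilNN p n (B : tensor R p p n) x y k : bil B (- x) (- y) k = bil B x y k.
Proof. by do 2 (apply: eq_bigr => ? _); rewrite !mxE mulrNN. Qed.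

Definition absmx p q (M : 'M[R]_(p, q)) : 'M[R]_(p, q) := map_mx Num.norm M.

Lemma bil_abs_le p n (B : tensor R p p n) x k : nonneg_tensor B ->
  `|bil B x x k| <= bil B (absmx x) (absmx x) k.
Proof.
move=> B_ge0; apply: le_trans (ler_norm_sum _ _ _) _; apply: ler_sum => i _.
apply: le_trans (ler_norm_sum _ _ _) _; apply: ler_sum => j _.
by rewrite !mxE !normrM (ger0_norm (B_ge0 i j k)).
Qed.

End Bilinear.

Section BlockDiagonal.
Variables (R : realType) (m1 m2 n : nat) (A1 : tensor R m1 m1 n) (A2 : tensor R m2 m2 n).
Local Notation A := (blk A1 A2).

Lemma blk_ll i j k : A (lshift m2 i) (lshift m2 j) k = A1 i j k.
Proof. by rewrite /blk !(unsplitK (inl _)). Qed.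
Lemma blk_rr i j k : A (rshift m1 i) (rshift m1 j) k = A2 i j k.
Proof. by rewrite /blk !(unsplitK (inr _)). Qed.
Lemma blk_lr i j k : A (lshift m2 i) (rshift m1 j) k = 0.
Proof. by rewrite /blk (unsplitK (inl _)) (unsplitK (inr _)). Qed.
Lemma blk_rl i j k : A (rshift m1 i) (lshift m2 j) k = 0.
Proof. by rewrite /blk (unsplitK (inl _)) (unsplitK (inr _)). Qed.

Lemma nonneg_blk : nonneg_tensor A -> nonneg_tensor A1 /\ nonneg_tensor A2.
Proof. by move=> A_ge0; split=> i j k; [rewrite -blk_ll | rewrite -blk_rr]. Qed.

Lemma sqnorm_blk : sqnorm A = sqnorm A1 + sqnorm A2.
Proof.
rewrite /sqnorm big_split_ord /=; congr (_ + _); apply: eq_bigr => i _;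
  rewrite big_split_ord /=.
  rewrite [X in _ + X]big1 ?addr0 => [|j _]; last by rewrite big1 // => k _; rewrite blk_lr expr0n.
  by apply: eq_bigr => j _; apply: eq_bigr => k _; rewrite blk_ll.
rewrite big1 ?add0r => [|j _]; last by rewrite big1 // => k _; rewrite blk_rl expr0n.
by apply: eq_bigr => j _; apply: eq_bigr => k _; rewrite blk_rr.
Qed.

Lemma bil_blk x1 x2 y1 y2 k :
  bil A (col_mx x1 x2) (col_mx y1 y2) k = bil A1 x1 y1 k + bil A2 x2 y2 k.
Proof.
rewrite /bil big_split_ord /=; congr (_ + _); apply: eq_bigr => i _;
  rewrite big_split_ord /= ?blk_ll ?blk_rr.
  rewrite [X in _ + X]big1 ?addr0 => [|j _]; last by rewrite blk_lr mulr0.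
  by apply: eq_bigr => j _; rewrite !col_mxEu blk_ll.
rewrite big1 ?add0r => [|j _]; last by rewrite blk_rl mulr0.
by apply: eq_bigr => j _; rewrite !col_mxEd blk_rr.
Qed.

Lemma tmulr_blk a b (X1 : 'M[R]_(m1, a)) (X2 : 'M[R]_(m2, a)) (Y1 : 'M[R]_(m1, b))
  (Y2 : 'M[R]_(m2, b)) (W : 'M[R]_(n, 2)) al be ga :
  tmulr A (col_mx X1 X2) (col_mx Y1 Y2) W al be ga =
  \sum_k W k ga * (bil A1 (col al X1) (col be Y1) k + bil A2 (col al X2) (col be Y2) k).
Proof. by rewrite tmulr_bil; apply: eq_bigr => k _; rewrite !col_col_mx bil_blk. Qed.

(* The sign flip D U, with D = diag(I_m1, -I_m2). *)
Definition flip a (U : 'M[R]_(m1 + m2, a)) := col_mx (usubmx U) (- dsubmx U).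

Lemma flip_mulmx a b (U : 'M[R]_(m1 + m2, a)) (V : 'M[R]_(a, b)) :
  flip (U *m V) = flip U *m V.
Proof. by rewrite /flip mul_col_mx mulNmx mul_usub_mx mul_dsub_mx. Qed.

Lemma orthonormal_flip a (U : 'M[R]_(m1 + m2, a)) :
  orthonormal_cols U -> orthonormal_cols (flip U).
Proof.
rewrite /orthonormal_cols -{1 2}(vsubmxK U) /flip !tr_col_mx !mul_row_col.
by rewrite mulmxN linearN /= mulNmx opprK.
Qed.

(* Since A is block diagonal, the sign flip leaves the objective unchanged. *)
Lemma is_solution_flip (U : 'M[R]_(m1 + m2, 2)) W :
  is_solution A U W -> is_solution A (flip U) W.
Proof.
move=> sol; have [oU oW _] := sol.
split; [exact: orthonormal_flip | done | move=> X Z oX oZ].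
rewrite tnorm_le (@sqnorm_ext _ _ _ _ (tmulr A (flip U) (flip U) W) (tmulr A U U W)).
  exact: is_solution_max.
move=> al be ga; rewrite /flip tmulr_blk -[in RHS](vsubmxK U) tmulr_blk.
by apply: eq_bigr => k _; rewrite !col_opp bilNN.
Qed.

Lemma flip_gram_sym a (U : 'M[R]_(m1 + m2, a)) : (U^T *m flip U)^T = U^T *m flip U.
Proof.
have -> : U^T = row_mx (usubmx U)^T (dsubmx U)^T by rewrite -tr_col_mx vsubmxK.
by rewrite /flip mul_row_col mulmxN linearB /= !trmx_mul !trmxK.
Qed.

Lemma varphi_ge_upper (U1 : 'M[R]_(m1, 2)) W :
  is_solution A (col_mx U1 0) W -> varphi A1 + sqnorm A2 <= varphi A.
Proof.
move=> sol; have [oU _ _] := sol.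
have oU1 : orthonormal_cols U1.
  by move: oU; rewrite /orthonormal_cols tr_col_mx mul_row_col mulmx0 addr0.
have := varphi_ge_compress (C := A1) sol oU1; rewrite sqnorm_blk.
have -> : sqnorm A1 + sqnorm A2 - sqnorm A1 = sqnorm A2 by ring.
apply=> al be ga; rewrite tmulr_blk tmulr_bil; apply: eq_bigr => k _.
by rewrite !col0 bil0l addr0.
Qed.

Lemma varphi_ge_lower (U2 : 'M[R]_(m2, 2)) W :
  is_solution A (col_mx 0 U2) W -> varphi A2 + sqnorm A1 <= varphi A.
Proof.
move=> sol; have [oU _ _] := sol.
have oU2 : orthonormal_cols U2.
  by move: oU; rewrite /orthonormal_cols tr_col_mx mul_row_col mulmx0 add0r.
have := varphi_ge_compress (C := A2) sol oU2; rewrite sqnorm_blk.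
have -> : sqnorm A1 + sqnorm A2 - sqnorm A2 = sqnorm A1 by ring.
apply=> al be ga; rewrite tmulr_blk tmulr_bil; apply: eq_bigr => k _.
by rewrite !col0 bil0l add0r.
Qed.

End BlockDiagonal.

Section BlockDiagonalFactors.
Variables (R : realType) (m1 m2 n : nat) (A1 : tensor R m1 m1 n) (A2 : tensor R m2 m2 n).
Local Notation A := (blk A1 A2).

Lemma col_block_diag (y1 : 'cV[R]_m1) (y2 : 'cV[R]_m2) :
  col o0 (block_mx y1 0 0 y2) = col_mx y1 0 /\ col o1 (block_mx y1 0 0 y2) = col_mx 0 y2.
Proof.
have l0 : o0 = lshift 1 (ord0 : 'I_1) :> 'I_(1 + 1) by exact/val_inj.
have r0 : o1 = rshift 1 (ord0 : 'I_1) :> 'I_(1 + 1) by exact/val_inj.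
rewrite l0 r0 block_mxEh (colKl ord0 (col_mx y1 0) (col_mx 0 y2)).
by rewrite (colKr ord0 (col_mx y1 0) (col_mx 0 y2)) !col_id.
Qed.

Lemma gram_block_diag (y1 : 'cV[R]_m1) (y2 : 'cV[R]_m2) :
  (block_mx y1 0 0 y2)^T *m block_mx y1 0 0 y2 = block_mx (y1^T *m y1) 0 0 (y2^T *m y2).
Proof. by rewrite tr_block_mx mulmx_block !trmx0 !mul0mx !mulmx0 !addr0 !add0r. Qed.

Lemma gram_abs p (y : 'cV[R]_p) : (absmx y)^T *m absmx y = y^T *m y.
Proof.
apply/matrixP => i j; rewrite !mxE !ord1; apply: eq_bigr => k _.
by rewrite !mxE -normrM ger0_norm // -expr2 sqr_ge0.
Qed.

Lemma orthonormal_block_diag_abs (y1 : 'cV[R]_m1) (y2 : 'cV[R]_m2) :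
  orthonormal_cols (block_mx y1 0 0 y2) ->
  orthonormal_cols (block_mx (absmx y1) 0 0 (absmx y2)).
Proof. by rewrite /orthonormal_cols !gram_block_diag !gram_abs. Qed.

Lemma sqnorm_block_diag (y1 : 'cV[R]_m1) (y2 : 'cV[R]_m2) (W : 'M[R]_(n, 2)) :
  sqnorm (tmulr A (block_mx y1 0 0 y2) (block_mx y1 0 0 y2) W) =
  \sum_ga (\sum_k W k ga * bil A1 y1 y1 k) ^+ 2 +
  \sum_ga (\sum_k W k ga * bil A2 y2 y2 k) ^+ 2.
Proof.
set Y := block_mx y1 0 0 y2; have [c0 c1] := col_block_diag y1 y2.
have e00 ga : tmulr A Y Y W o0 o0 ga = \sum_k W k ga * bil A1 y1 y1 k.
  by rewrite tmulr_bil c0; apply: eq_bigr => k _; rewrite bil_blk bil0l addr0.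
have e11 ga : tmulr A Y Y W o1 o1 ga = \sum_k W k ga * bil A2 y2 y2 k.
  by rewrite tmulr_bil c1; apply: eq_bigr => k _; rewrite bil_blk bil0l add0r.
have e01 ga : tmulr A Y Y W o0 o1 ga = 0.
  by rewrite tmulr_bil c0 c1 big1 // => k _; rewrite bil_blk bil0l bil0r addr0 mulr0.
have e10 ga : tmulr A Y Y W o1 o0 ga = 0.
  by rewrite tmulr_bil c0 c1 big1 // => k _; rewrite bil_blk bil0l bil0r addr0 mulr0.
by rewrite /sqnorm !sum_I2 !e00 !e11 !e01 !e10 expr0n /=; ring.
Qed.

(* Replacing block-diagonal factors by their absolute values, and W by a frame
   spanning the two slice-form vectors, does not decrease the objective: by
   Bessel's inequality and |y^T B_k y| <= |y|^T B_k |y| for B >= 0. *)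
Lemma block_diag_abs_improves (y1 : 'cV[R]_m1) (y2 : 'cV[R]_m2) (W : 'M[R]_(n, 2)) :
  (2 <= n)%N -> nonneg_tensor A -> orthonormal_cols W ->
  exists W' : 'M[R]_(n, 2), orthonormal_cols W' /\
    sqnorm (tmulr A (block_mx y1 0 0 y2) (block_mx y1 0 0 y2) W) <=
    sqnorm (tmulr A (block_mx (absmx y1) 0 0 (absmx y2))
                    (block_mx (absmx y1) 0 0 (absmx y2)) W').
Proof.
move=> n_ge2 /nonneg_blk [A1_ge0 A2_ge0] oW.
set q1 := bil A1 (absmx y1) (absmx y1); set q2 := bil A2 (absmx y2) (absmx y2).
have [W' [oW' [t1 q1E] [t2 q2E]]] := orthonormal_frame_spanning n_ge2 q1 q2.
exists W'; split => //; rewrite !sqnorm_block_diag.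
have spanned q t : (forall k, q k = \sum_de W' k de * t de) ->
    \sum_ga (\sum_k W' k ga * q k) ^+ 2 = \sum_k q k ^+ 2.
  move=> qE; under eq_bigr do under eq_bigr do rewrite qE.
  by rewrite bessel_span //; apply: eq_bigr => k _; rewrite qE.
have sq_le p (B : tensor R p p n) (y : 'cV[R]_p) k : nonneg_tensor B ->
    bil B y y k ^+ 2 <= bil B (absmx y) (absmx y) k ^+ 2.
  move=> B_ge0; rewrite -real_normK ?num_real // -[leRHS]real_normK ?num_real //.
  rewrite lerXn2r ?nnegrE ?normr_ge0 //.
  exact: le_trans (bil_abs_le y k B_ge0) (ler_norm _).
rewrite (spanned q1 t1 q1E) (spanned q2 t2 q2E); apply: lerD.
  by apply: le_trans (bessel _ oW) _; apply: ler_sum => k _; exact: sq_le.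
by apply: le_trans (bessel _ oW) _; apply: ler_sum => k _; exact: sq_le.
Qed.

Lemma is_solution_block_diag_abs (y1 : 'cV[R]_m1) (y2 : 'cV[R]_m2) (W : 'M[R]_(n, 2)) :
  (2 <= n)%N -> nonneg_tensor A -> is_solution A (block_mx y1 0 0 y2) W ->
  exists W', is_solution A (block_mx (absmx y1) 0 0 (absmx y2)) W'.
Proof.
move=> n_ge2 A_ge0 sol; have [oY oW _] := sol.
have [W' [oW' improves]] := block_diag_abs_improves y1 y2 n_ge2 A_ge0 oW.
exists W'; split; [exact: orthonormal_block_diag_abs | done | move=> X Z oX oZ].
by rewrite tnorm_le; apply: le_trans improves; exact: is_solution_max.
Qed.

End BlockDiagonalFactors.

Section Uniqueness.
Variables (R : realType) (m1 m2 n : nat) (A1 : tensor R m1 m1 n) (A2 : tensor R m2 m2 n).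
Local Notation A := (blk A1 A2).

Lemma flip_refl2_block (Y : 'M[R]_(m1 + m2, 1 + 1)) :
  flip Y = Y *m refl2 -> Y = block_mx (ulsubmx Y) 0 0 (drsubmx Y).
Proof.
have flipE : flip Y = block_mx (ulsubmx Y) (ursubmx Y) (- dlsubmx Y) (- drsubmx Y).
  by rewrite block_mxEv -opp_row_mx !hsubmxK.
have reflE : Y *m refl2 = block_mx (ulsubmx Y) (- ursubmx Y) (dlsubmx Y) (- drsubmx Y).
  rewrite -{1}(submxK Y) refl2_block.
  rewrite (mulmx_block _ _ _ _ (1%:M : 'M_1) 0 0 (- 1%:M)).
  by rewrite !mulmx0 !mulmxN !mulmx1 !addr0 !add0r.
rewrite flipE reflE => /eq_block_mx [_ ur_eq dl_eq _].
by rewrite -[LHS]submxK (mx_eq_opp ur_eq) (mx_eq_opp (esym dl_eq)).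
Qed.

Lemma block_diag_solution (U : 'M[R]_(m1 + m2, 2)) (W : 'M[R]_(n, 2)) :
  unique_solution A ->
  varphi A < varphi A1 + sqnorm A2 -> varphi A < varphi A2 + sqnorm A1 ->
  is_solution A U W ->
  exists (y1 : 'cV[R]_m1) (y2 : 'cV[R]_m2), is_solution A (block_mx y1 0 0 y2) W.
Proof.
move=> uniq lt1 lt2 sol; have [oU _ _] := sol.
have [Q [_ [oQ _ flipU _]]] := uniq _ _ _ _ sol (is_solution_flip sol).
have Q_sym : Q^T = Q.
  have -> : Q = U^T *m flip U by rewrite flipU mulmxA oU mul1mx.
  exact: flip_gram_sym.
case: (sym_orthogonal2 oQ Q_sym) => [Q1|QN|[V [oV QV]]].
- (* D U = U: U vanishes on the second block, against the first hypothesis *)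
  have U2 : dsubmx U = 0.
    by apply: mx_eq_opp; move: flipU; rewrite Q1 mulmx1 => /(congr1 dsubmx); rewrite col_mxKd.
  have := @varphi_ge_upper _ _ _ _ A1 A2 (usubmx U) W; rewrite -U2 vsubmxK => /(_ sol).
  by lra.
- (* D U = -U: U vanishes on the first block, against the second hypothesis *)
  have U1 : usubmx U = 0.
    by apply: mx_eq_opp; move: flipU; rewrite QN mulmxN mulmx1 => /(congr1 usubmx);
      rewrite col_mxKu linearN.
  have := @varphi_ge_lower _ _ _ _ A1 A2 (dsubmx U) W; rewrite -U1 vsubmxK => /(_ sol).
  by lra.
(* D (U V) = (U V) diag(1, -1): the rotated solution U V is block diagonal *)
pose Y : 'M[R]_(m1 + m2, 1 + 1) := U *m V.
have flipY : flip Y = Y *m refl2 by rewrite /Y flip_mulmx flipU -mulmxA QV mulmxA.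
exists (ulsubmx Y), (drsubmx Y); rewrite -flip_refl2_block //.
exact: is_solution_rot.
Qed.

End Uniqueness.

Theorem mainTheorem4 (R : realType) (m1 m2 n : nat)
  (A1 : tensor R m1 m1 n) (A2 : tensor R m2 m2 n) :
  (2 <= m1)%N -> (2 <= m2)%N -> (2 <= n)%N ->
  sym12 (blk A1 A2) ->
  nonneg_tensor (blk A1 A2) ->
  irreducible A1 -> irreducible A2 ->
  varphi (blk A1 A2) < varphi A1 + tnorm A2 ^+ 2 ->
  varphi (blk A1 A2) < varphi A2 + tnorm A1 ^+ 2 ->
  unique_solution (blk A1 A2) ->
  exists (u1 : 'cV[R]_m1) (u2 : 'cV[R]_m2) (W : 'M[R]_(n, 2)),
    [/\ is_solution (blk A1 A2) (block_mx u1 0 0 u2) W,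
        forall i, 0 <= u1 i ord0 &
        forall i, 0 <= u2 i ord0].
Proof.
move=> m1_ge2 _ n_ge2 _ A_ge0 _ _ lt1 lt2 uniq; rewrite !tnorm_sq in lt1 lt2.
have [U [W sol]] := exists_solution (blk A1 A2) (leq_trans m1_ge2 (leq_addr m2 m1)) n_ge2.
have [y1 [y2 sol_block]] := block_diag_solution uniq lt1 lt2 sol.
have [W' sol_abs] := is_solution_block_diag_abs n_ge2 A_ge0 sol_block.
by exists (absmx y1), (absmx y2), W'; split => // i; rewrite mxE normr_ge0.
Qed.
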